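(* Let $N$ be an isolating block and $S=\operatorname{Inv} N$. If $L$ is any sufficiently small compact neighborhood of $N^-$ in $N$, then $(N,L)$ is a filtration pair for $S$. Moreover, there is a neighborhood of $f$ in the $C^0$ topology such that for any $\tilde f$ in this neighborhood, $\tilde S=\operatorname{Inv}(N\setminus L,\tilde f)$ (the maximal invariant subset computed with respect to $\tilde f$) is an isolated invariant set for $\tilde f$ and $(N,L)$ is a filtration pair for $\tilde S$ with respect to $\tilde f$.
   Context: Let $X$ be a locally compact metric space, $U\subset X$ open and $f:U\to X$ continuous. For $N\subset U$, a solution through $x$ is a map $\sigma:\mathbb Z\to U$ with $\sigma(0)=x$ and $f(\sigma(n))=\sigma(n+1)$ for all $n$; $\operatorname{Inv} N$ is the set of $x\in N$ admitting a solution through $x$ with all values in $N$. A compact set $N\subset U$ is an isolating neighborhood if $\operatorname{Inv} N\subset\operatorname{Int} N$; a set $S$ is an isolated invariant set if $S=\operatorname{Inv} N$ for some isolating neighborhood $N$. A compact set $N$ is an isolating block if $f(N)\cap N\cap f^{-1}(N)\subset\operatorname{Int} N$. The exit set of $N$ is $N^-=\{x\in N: f(x)\notin\operatorname{Int} N\}$. A filtration pair for an isolated invariant set $S$ is a pair of compact sets $L\subset N$ contained in the interior of the domain of $f$, each equal to the closure of its interior, such that (1) $\operatorname{cl}(N\setminus L)$ is an isolating neighborhood with $\operatorname{Inv}\operatorname{cl}(N\setminus L)=S$; (2) $L$ is a neighborhood of $N^-$ in $N$; (3) $f(L)\cap\operatorname{cl}(N\setminus L)=\emptyset$. The same notions are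 used for any other continuous map $\tilde f:U\to X$ in place of $f$.
   Formalization: The isolating block N is also assumed to equal the closure of its interior, and L ranges only over those sufficiently small compact neighborhoods of $N^-$ in N that equal the closure of their interior. The statement above fails without it. *)

From HB Require Import structures.
From mathcomp Require Import all_boot all_order all_algebra.
From mathcomp Require Import all_classical all_reals all_analysis.
Set Implicit Arguments. Unset Strict Implicit. Unset Printing Implicit Defensive.
Import Order.TTheory GRing.Theory Num.Theory.
Local Open Scope classical_set_scope.
Local Open Scope ring_scope.

Section Conley.
Context {R : realType} {X : pseudoMetricType R}.

(* A map f : U -> X is represented by a total f : X -> X; only its values
   on the domain U matter. *)
Definition InvSet (U : set X) (f : X -> X) (N : set X) : set X :=
  [set x | N x /\ exists sigma : int -> X,
     sigma 0 = x /\ forall n : int,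
       U (sigma n) /\ N (sigma n) /\ f (sigma n) = sigma (n + 1)].

Definition isolating_nbhd (U : set X) (f : X -> X) (N : set X) : Prop :=
  compact N /\ N `<=` U /\ InvSet U f N `<=` interior N.

Definition isolated_invariant_set (U : set X) (f : X -> X) (S : set X) : Prop :=
  exists N, isolating_nbhd U f N /\ S = InvSet U f N.

Definition isolating_block (U : set X) (f : X -> X) (N : set X) : Prop :=
  compact N /\ N `<=` U /\
  (f @` N) `&` N `&` (U `&` f @^-1` N) `<=` interior N.

Definition exit_set (f : X -> X) (N : set X) : set X :=
  [set x | N x /\ ~ interior N (f x)].

Definition nbhd_in (N A L : set X) : Prop :=
  L `<=` N /\ exists O : set X, open O /\ A `<=` O /\ O `&` N `<=` L.

Definition filtration_pair (U : set X) (f : X -> X) (S N L : set X) : Prop :=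
  compact L /\ compact N /\ L `<=` N /\
  N `<=` interior U /\ L `<=` interior U /\
  closure (interior N) = N /\ closure (interior L) = L /\
  isolating_nbhd U f (closure (N `\` L)) /\ InvSet U f (closure (N `\` L)) = S /\
  nbhd_in N (exit_set f N) L /\
  (f @` L) `&` closure (N `\` L) = set0.

Definition cont_on (U : set X) (f : X -> X) : Prop :=
  forall x, U x -> {for x, continuous f}.

End Conley.

From HB Require Import structures.
From mathcomp Require Import all_boot all_order all_algebra.
From mathcomp Require Import all_classical all_reals all_analysis.

Set Implicit Arguments.
Unset Strict Implicit.
Unset Printing Implicit Defensive.
Import Order.TTheory GRing.Theory Num.Theory.
Local Open Scope classical_set_scope.
Local Open Scope ring_scope.

(* Let D := stay2 f N be the set of points of N whose first two iterates stay
   in N.  The block property says exactly that D misses the exit set N^-, and D is closed,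
   so W := ~D is an open neighbourhood of N^-.  If L lies in W, no point of L
   has two iterates in N; hence f(L) misses cl(N \ L), and Inv(N \ L) = Inv N.
   The three properties that make (N, L) a filtration pair -- N^- has a
   neighbourhood V with V /\ N in L, f(L) misses cl(N \ L), and Inv N lies in
   Int N -- each say that a continuous map sends a compact set into the
   complement of a closed set, so by compactness they survive C^0-small
   perturbations of f on N.  For the last one the map is x |-> (x, f x) on the
   boundary of N and the closed set is f(N) x N, which it misses by the block
   property. *)

Lemma closed_setX {T1 T2 : topologicalType} (A : set T1) (B : set T2) :
  closed A -> closed B -> closed (A `*` B).
Proof.
move=> cA cB; rewrite -[_ `*` _]/(fst @^-1` A `&` snd @^-1` B).
by apply: closedI; apply: preimage_closed => // -[a b] _; [exact: cvg_fst | exact: cvg_snd].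
Qed.

Lemma closure_setD_sub {T : topologicalType} (A B : set T) :
  closed A -> closure (A `\` B) `<=` A.
Proof. by move=> cA; rewrite [X in _ `<=` X](closure_id _).1 //; exact: closureS. Qed.

Lemma closure_mapsto {T1 T2 : topologicalType} (A : set T1) (C : set T2)
    (h : T1 -> T2) x :
  closed C -> {for x, continuous h} -> closure A x -> h @` A `<=` C -> C (h x).
Proof.
move=> cC hx clAx hAC; apply: contrapT => nCx.
have /hx /clAx [y [Ay /= nCy]] : nbhs (h x) (~` C).
  by apply: open_nbhs_nbhs; split => //; exact: closed_openC.
by apply: nCy; apply: hAC; exists y.
Qed.

Lemma compact_near_ball_avoid {R : realType} {X Y : pseudoMetricType R}
    (A : set X) (C : set Y) (h : X -> Y) :
  compact A -> closed C -> (forall x, A x -> {for x, continuous h}) ->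
  (forall x, A x -> ~ C (h x)) ->
  \forall e \near (0 : R)^'+, forall z w, A z -> ball (h z) e w -> ~ C w.
Proof.
move=> /compact_near_coveringP cA cC hc hAC.
pose P e z := forall w, ball (h z) e w -> ~ C w.
suff /(cA _ _ P _) : forall x, A x -> \forall x' \near x & e \near (0 : R)^'+, P e x'.
  by apply: filterS => e AP z w /AP; apply.
move=> x Ax; have /nbhs_ballP [r /= r0 rC] : nbhs (h x) (~` C).
  by apply: open_nbhs_nbhs; split; [exact: closed_openC | exact: hAC].
have r20 : 0 < r / 2 by rewrite divr_gt0.
near=> x' e.
have hx'x : ball (h x) (r / 2) (h x') by near: x'; apply: hc => //; exact: nbhsx_ballx.
have er : e <= r / 2 by apply: ltW; near: e; exact: nbhs_right_lt.
move=> w /(le_ball er) hx'w; apply: rC.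
by rewrite [r]splitr; exact: ball_triangle hx'x hx'w.
Unshelve. all: end_near. Qed.

Section InvariantSets.
Context {R : realType} {X : pseudoMetricType R} (U : set X) (h : X -> X).

Lemma InvSetS (M1 M2 : set X) :
  M1 `<=` M2 -> InvSet U h M1 `<=` InvSet U h M2.
Proof.
move=> M12 x [M1x [sig [sig0 hsig]]]; split; first exact: M12.
exists sig; split => // n; have [? [? ?]] := hsig n; split => //; split => //.
exact: M12.
Qed.

Lemma solution_InvSet (M : set X) (sig : int -> X) :
  (forall n, U (sig n) /\ M (sig n) /\ h (sig n) = sig (n + 1)) ->
  forall n, InvSet U h M (sig n).
Proof.
move=> hsig n; split; first by have [_ []] := hsig n.
exists (fun k => sig (n + k)); split; first by rewrite addr0.
by move=> k; rewrite addrA; exact: hsig.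
Qed.

Lemma InvSet_closureD (N L : set X) :
  closed N -> h @` L `&` closure (N `\` L) = set0 ->
  InvSet U h (closure (N `\` L)) = InvSet U h (N `\` L).
Proof.
move=> cN hLNL; apply/seteqP; split; last exact/InvSetS/subset_closure.
move=> x [_ [sig [sig0 hsig]]].
have NLsig n : (N `\` L) (sig n).
  have [_ [NLn hsign]] := hsig n; split; first exact: closure_setD_sub NLn.
  move=> Ln; have [_ [NLn1 _]] := hsig (n + 1).
  by rewrite -[False]/(set0 (sig (n + 1))) -hLNL; split => //; exists (sig n).
split; first by rewrite -sig0.
by exists sig; split => // n; have [? [_ ?]] := hsig n; split.
Qed.

End InvariantSets.

Section FiltrationPairs.
Context {R : realType} {X : pseudoMetricType R} (U : set X) (h : X -> X).
Variables N L : set X.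
Hypotheses (hX : hausdorff_space X) (cN : compact N) (cL : compact L).
Hypotheses (hLNL : h @` L `&` closure (N `\` L) = set0)
  (InvN : InvSet U h N `<=` interior N).

Lemma isolating_nbhd_closureD :
  N `<=` U -> isolating_nbhd U h (closure (N `\` L)).
Proof.
move=> NU; have NLN := closure_setD_sub (B := L) (compact_closed hX cN).
split; first exact: subclosed_compact (@closed_closure _ _) cN NLN.
split; first by move=> y /NLN /NU.
rewrite (InvSet_closureD _ (compact_closed hX cN) hLNL) => x Invx; have [[_ nLx] _] := Invx.
have : open_nbhs x (interior N `&` ~` L).
  split; last by split => //; apply: InvN; apply: InvSetS Invx => ? [].
  by apply: openI; [exact: open_interior | exact: closed_openC (compact_closed hX cL)].
move=> /open_nbhs_nbhs; apply: filterS => y [Ny nLy].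
by apply: subset_closure; split => //; exact: interior_subset.
Qed.

Lemma filtration_pair_setD : open U -> N `<=` U ->
  closure (interior N) = N -> closure (interior L) = L ->
  nbhd_in N (exit_set h N) L ->
  isolated_invariant_set U h (InvSet U h (N `\` L)) /\
  filtration_pair U h (InvSet U h (N `\` L)) N L.
Proof.
move=> oU NU intN intL [LN nbL].
have InvNL := InvSet_closureD U (compact_closed hX cN) hLNL.
have iso := isolating_nbhd_closureD NU.
split; first by exists (closure (N `\` L)).
rewrite /filtration_pair (_ : interior U = U); last exact/interior_id.
have LU : L `<=` U by move=> ? /LN /NU.
by do 10 split => //.
Qed.

End FiltrationPairs.

Section IsolatingBlock.
Context {R : realType} {X : pseudoMetricType R} (U : set X) (f : X -> X).
Variable N : set X.
Hypotheses (hX : hausdorff_space X) (fc : cont_on U f) (cN : compact N)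
  (NU : N `<=` U) (blk : f @` N `&` N `&` (U `&` f @^-1` N) `<=` interior N).

Let clN : closed N := compact_closed hX cN.

Definition stay2 := [set y | N y /\ N (f y) /\ N (f (f y))].

Lemma closed_stay2 : closed stay2.
Proof.
move=> x clx; have Nx : N x by apply: clN; apply: closureS clx => ? [].
have fx := fc (NU Nx).
have Nfx : N (f x) by apply: closure_mapsto clN fx clx _ => _ [y [_ [? _]] <-].
split; [|split] => //; apply: (@closure_mapsto _ _ _ _ (f \o f) _ clN _ clx).
  exact: continuous_comp fx (fc (NU Nfx)).
by move=> _ [y [_ [_ ?]] <-].
Qed.

Lemma exit_set_stay2 : exit_set f N `<=` ~` stay2.
Proof.
move=> y [Ny nfy] [_ [Nfy Nffy]]; apply: nfy; apply: blk.
by split; [split; [exists y|] | split; [exact: NU|]].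
Qed.

Lemma InvSet_stay2 : InvSet U f N `<=` stay2.
Proof.
move=> x [Nx [sig [sig0 hsig]]].
have [_ [_ e0]] := hsig 0; have [_ [N1 e1]] := hsig 1; have [_ [N2 _]] := hsig (1 + 1).
by rewrite add0r in e0; rewrite -sig0 /stay2 /= e0 e1 sig0.
Qed.

Lemma InvSet_setD_stay2 (L : set X) :
  L `<=` ~` stay2 -> InvSet U f (N `\` L) = InvSet U f N.
Proof.
move=> Lstay; apply/seteqP; split; first by apply: InvSetS => ? [].
move=> x [_ [sig [sig0 hsig]]].
have NLsig n : (N `\` L) (sig n).
  have /InvSet_stay2 stay := solution_InvSet hsig n.
  by split; [exact: stay.1 | move=> /Lstay].
split; first by rewrite -sig0.
by exists sig; split => // n; have [? [_ ?]] := hsig n; split.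
Qed.

Lemma image_closureD_stay2 (L : set X) :
  nbhd_in N (exit_set f N) L -> L `<=` ~` stay2 ->
  f @` L `&` closure (N `\` L) = set0.
Proof.
move=> [LN [V [oV [exitV VNL]]]] Lstay.
have NLNV : closure (N `\` L) `<=` N `&` ~` V.
  rewrite [X in _ `<=` X](closure_id _).1; last exact: closedI (open_closedC oV).
  by apply: closureS => z [Nz nLz]; split => // Vz; apply: nLz; exact: VNL.
apply/seteqP; split => // _ [[z Lz <-] /NLNV [Nfz nVfz]].
apply: (Lstay z Lz); split; first exact: LN.
split => //; apply: interior_subset; apply: contrapT => nffz.
by apply: nVfz; apply: exitV.
Qed.

Lemma near_exit_set_sub (V : set X) : open V -> exit_set f N `<=` V ->
  \forall e \near (0 : R)^'+, forall g : X -> X,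
    (forall x, N x -> ball (f x) e (g x)) -> exit_set g N `<=` V.
Proof.
move=> oV exitV.
have inside : forall x, (N `&` ~` V) x -> ~ (~` interior N) (f x).
  by move=> x [Nx nVx] nfx; apply: nVx; apply: exitV.
have := compact_near_ball_avoid (compact_closedI cN (open_closedC oV))
  (open_closedC (@open_interior _ N)) (fun x Ax => fc (NU Ax.1)) inside.
apply: filterS => e avoid g close x [Nx ngx]; apply: contrapT => nVx.
exact: avoid (conj Nx nVx) (close x Nx) ngx.
Qed.

Lemma near_InvSet_interior :
  \forall e \near (0 : R)^'+, forall g : X -> X,
    (forall x, N x -> ball (f x) e (g x)) -> InvSet U g N `<=` interior N.
Proof.
have cfN : closed (f @` N).
  apply: compact_closed hX _; apply: continuous_compact => //.
  by apply: continuous_in_subspaceT => x /set_mem Nx; exact: fc (NU Nx).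
have graph_cont : forall x, N x -> {for x, continuous (fun y => (y, f y))}.
  by move=> x Nx; apply: cvg_pair; [exact: cvg_id | exact: fc (NU Nx)].
have boundary : forall x, (N `&` ~` interior N) x -> ~ (f @` N `*` N) (x, f x).
  move=> x [Nx nNx] [fNx Nfx]; apply: nNx; apply: blk.
  by split; [|split; [exact: NU|]].
have := compact_near_ball_avoid
  (compact_closedI cN (open_closedC (@open_interior _ N)))
  (closed_setX cfN clN) (fun x Ax => graph_cont x Ax.1) boundary.
apply: filterS => e avoid g close x [Nx [sig [sig0 hsig]]].
apply: contrapT => nNx.
have [_ [Nm1 em1]] := hsig (-1); rewrite addNr sig0 in em1.
have [_ [_ e0]] := hsig 0; rewrite add0r sig0 in e0; have [_ [N1 _]] := hsig 1.
apply: (avoid x (f (sig (-1)), g x) (conj Nx nNx)).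
  by split => /=; [rewrite -em1; exact/ball_sym/close | exact: close].
by split; [exists (sig (-1)) | rewrite /= e0].
Qed.

Lemma near_image_closureD (L : set X) :
  compact L -> nbhd_in N (exit_set f N) L -> L `<=` ~` stay2 ->
  \forall e \near (0 : R)^'+, forall g : X -> X,
    (forall x, N x -> ball (f x) e (g x)) ->
    g @` L `&` closure (N `\` L) = set0.
Proof.
move=> cL nbL Lstay; have [LN _] := nbL.
have fLNL : forall x, L x -> ~ closure (N `\` L) (f x).
  move=> x Lx NLfx; rewrite -[False]/(set0 (f x)).
  by rewrite -(image_closureD_stay2 nbL Lstay); split => //; exists x.
have := compact_near_ball_avoid cL (@closed_closure _ (N `\` L))
  (fun x Lx => fc (NU (LN _ Lx))) fLNL.
apply: filterS => e avoid g close; apply/seteqP; split => // _ [[z Lz <-]].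
exact: avoid Lz (close z (LN _ Lz)).
Qed.

Lemma near_filtration_pair (L : set X) : open U ->
  closure (interior N) = N -> compact L -> closure (interior L) = L ->
  nbhd_in N (exit_set f N) L -> L `<=` ~` stay2 ->
  \forall e \near (0 : R)^'+, forall g : X -> X,
    (forall x, N x -> ball (f x) e (g x)) ->
    isolated_invariant_set U g (InvSet U g (N `\` L)) /\
    filtration_pair U g (InvSet U g (N `\` L)) N L.
Proof.
move=> oU intN cL intL nbL Lstay; have [LN [V [oV [exitV VNL]]]] := nbL.
move: (near_image_closureD cL nbL Lstay) near_InvSet_interior
  (near_exit_set_sub oV exitV); apply: filterS3 => e disj inv exit g close.
apply: filtration_pair_setD (disj g close) (inv g close) _ _ _ _ _ => //.
by split => //; exists V; split => //; split => //; exact: exit.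
Qed.

End IsolatingBlock.

Theorem mainTheorem2 (R : realType) (X : pseudoMetricType R)
  (U : set X) (f : X -> X) (N : set X) :
  hausdorff_space X ->
  locally_compact [set: X] ->
  open U ->
  cont_on U f ->
  isolating_block U f N ->
  closure (interior N) = N ->
  exists W : set X, open W /\ exit_set f N `<=` W /\
    forall L : set X,
      compact L -> nbhd_in N (exit_set f N) L -> L `<=` W ->
      closure (interior L) = L ->
      filtration_pair U f (InvSet U f N) N L /\
      exists K : set X, compact K /\ K `<=` U /\
      exists eps : R, 0 < eps /\
        forall g : X -> X, cont_on U g ->
          (forall x, K x -> ball (f x) eps (g x)) ->
          isolated_invariant_set U g (InvSet U g (N `\` L)) /\
          filtration_pair U g (InvSet U g (N `\` L)) N L.
Proof.
move=> hX _ oU fc [cN [NU blk]] intN.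
exists (~` stay2 f N); split; first exact: closed_openC (closed_stay2 hX fc cN NU).
split; first exact: (exit_set_stay2 NU blk).
move=> L cL nbL Lstay intL.
have [e [e0 perturb]] := filter_ex (filterI (nbhs_right_gt 0)
  (near_filtration_pair hX fc cN NU blk oU intN cL intL nbL Lstay)).
split.
  rewrite -(InvSet_setD_stay2 U Lstay).
  by have [] := perturb f (fun x _ => ballxx (f x) e0).
exists N; do 2 split => //; exists e; split => // g _; exact: perturb.
Qed.
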